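(* Let $(X,S)$ be an $S$-metric space, $r\ge0$, and let $\{x_n\}$ be an $r$-statistically convergent sequence in $X$. Then $\operatorname{diam}(st\text{-}LIM^r x_n)\le 3r$.
   Context: An $S$-metric on a nonempty set $X$ is a function $S:X^3\to[0,\infty)$ such that for all $x,y,z,a\in X$: $S(x,y,z)=0$ if and only if $x=y=z$, and $S(x,y,z)\le S(x,x,a)+S(y,y,a)+S(z,z,a)$. For $B\subset\mathbb N$ the natural density is $\delta(B)=\lim_{n\to\infty}\frac{|\{k\in B:k\le n\}|}{n}$ when the limit exists. For $r\ge0$, $\{x_n\}$ is $r$-statistically convergent to $x$ if for every $\varepsilon>0$, $\delta(\{n\in\mathbb N: S(x_n,x_n,x)\ge r+\varepsilon\})=0$; $st\text{-}LIM^r x_n$ denotes the set of all $x\in X$ to which $\{x_n\}$ is $r$-statistically convergent, and $\{x_n\}$ is called $r$-statistically convergent if this set is nonempty. For $A\subset X$, $\operatorname{diam}(A)=\sup\{S(x,x,y): x,y\in A\}$. *)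

From Stdlib Require Import Reals ClassicalEpsilon.
From Coquelicot Require Import Coquelicot.
Open Scope R_scope.

Definition is_S_metric {X : Type} (S : X -> X -> X -> R) : Prop :=
  (forall x y z, 0 <= S x y z) /\
  (forall x y z, S x y z = 0 <-> (x = y /\ y = z)) /\
  (forall x y z a, S x y z <= S x x a + S y y a + S z z a).

Definition ind (B : nat -> Prop) (k : nat) : R :=
  if excluded_middle_informative (B k) then 1 else 0.

Fixpoint count_upto (B : nat -> Prop) (n : nat) : R :=
  match n with
  | O => 0
  | S m => count_upto B m + ind B (S m)
  end.

Definition density_zero (B : nat -> Prop) : Prop :=
  is_lim_seq (fun n => count_upto B n / INR n) 0.

(** x is in st-LIM^r x_n (sequence indexed by positive naturals; x 0 unused) *)
Definition st_LIM {X : Type} (S : X -> X -> X -> R) (r : R) (x : nat -> X) (l : X) : Prop :=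
  forall eps : R, 0 < eps ->
    density_zero (fun n => (1 <= n)%nat /\ S (x n) (x n) l >= r + eps).

Definition diam {X : Type} (S : X -> X -> X -> R) (A : X -> Prop) : Rbar :=
  Lub_Rbar (fun d => exists x y, A x /\ A y /\ d = S x x y).

(** Symmetry of an S-metric, [S(y,y,a) = S(a,a,y)], turns the defining
    inequality with [a := x_n] into [S(y,y,z) <= 2 S(x_n,x_n,y) + S(x_n,x_n,z)].
    The indices [n] at which [S(x_n,x_n,y) >= r + eps] or [S(x_n,x_n,z) >= r + eps]
    form a set of density zero, so some [n] avoids both, giving
    [S(y,y,z) < 3 (r + eps)] for every [eps > 0]. *)

From Pilot Require Import Defs.
From Stdlib Require Import Reals Lra Lia Classical ClassicalEpsilon.
From Coquelicot Require Import Coquelicot.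
Open Scope R_scope.

Section SMetric.

Variables (X : Type) (S : X -> X -> X -> R).
Hypothesis HS : is_S_metric S.

Lemma S_metric_diag (a : X) : S a a a = 0.
Proof. apply (proj1 (proj2 HS)); split; reflexivity. Qed.

Lemma S_metric_swap_le (a b : X) : S a a b <= S b b a.
Proof.
  pose proof (proj2 (proj2 HS) a a b a) as Htri.
  rewrite S_metric_diag in Htri; lra.
Qed.

Lemma S_metric_swap (a b : X) : S a a b = S b b a.
Proof. apply Rle_antisym; apply S_metric_swap_le. Qed.

Lemma S_metric_le_through (y z a : X) : S y y z <= 2 * S a a y + S a a z.
Proof.
  pose proof (proj2 (proj2 HS) y y z a) as Htri.
  rewrite (S_metric_swap y a), (S_metric_swap z a) in Htri; lra.
Qed.

End SMetric.

Lemma ind_bounds (B : nat -> Prop) (k : nat) : 0 <= Defs.ind B k <= 1.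
Proof. unfold Defs.ind; destruct excluded_middle_informative; lra. Qed.

Lemma count_upto_nonneg (B : nat -> Prop) (n : nat) : 0 <= count_upto B n.
Proof.
  induction n as [|n IH]; simpl; [lra|].
  pose proof (ind_bounds B (S n)); lra.
Qed.

Lemma count_upto_union_le (B1 B2 : nat -> Prop) (n : nat) :
  count_upto (fun k => B1 k \/ B2 k) n <= count_upto B1 n + count_upto B2 n.
Proof.
  induction n as [|n IH]; simpl; [lra|].
  unfold Defs.ind.
  destruct (excluded_middle_informative (B1 (S n) \/ B2 (S n))) as [H|H];
  destruct (excluded_middle_informative (B1 (S n)));
  destruct (excluded_middle_informative (B2 (S n))); tauto || lra.
Qed.

Lemma count_upto_full (B : nat -> Prop) (n : nat) :
  (forall k, (1 <= k)%nat -> B k) -> count_upto B n = INR n.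
Proof.
  intros HB; induction n as [|n IH]; simpl count_upto; [reflexivity|].
  rewrite IH, S_INR; unfold Defs.ind.
  destruct excluded_middle_informative as [_|H]; [reflexivity|].
  exfalso; apply H, HB; lia.
Qed.

Lemma Rinv_INR_nonneg (n : nat) : 0 <= / INR n.
Proof.
  destruct n as [|n]; [simpl; rewrite Rinv_0; lra|].
  apply Rlt_le, Rinv_0_lt_compat, lt_0_INR; lia.
Qed.

Lemma density_zero_union (B1 B2 : nat -> Prop) :
  density_zero B1 -> density_zero B2 ->
  density_zero (fun k => B1 k \/ B2 k).
Proof.
  intros H1 H2; unfold density_zero.
  apply (is_lim_seq_le_le (fun _ => 0) _
           (fun n => count_upto B1 n / INR n + count_upto B2 n / INR n)).
  - intros n; pose proof (Rinv_INR_nonneg n); unfold Rdiv; split.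
    + apply Rmult_le_pos; [apply count_upto_nonneg | assumption].
    + rewrite <- Rmult_plus_distr_r.
      apply Rmult_le_compat_r; [assumption | apply count_upto_union_le].
  - apply is_lim_seq_const.
  - replace (Finite 0) with (Finite (0 + 0)) by (f_equal; ring).
    now apply is_lim_seq_plus'.
Qed.

(* A density-zero set cannot contain every positive integer, whose density is 1. *)
Lemma density_zero_exists_not (B : nat -> Prop) :
  density_zero B -> exists n, (1 <= n)%nat /\ ~ B n.
Proof.
  intros HB; apply NNPP; intros Hall.
  assert (Hfull : forall k, (1 <= k)%nat -> B k).
  { intros k hk; apply NNPP; intros Hk; apply Hall; now exists k. }
  assert (Hone : is_lim_seq (fun n => count_upto B n / INR n) 1).
  { apply (is_lim_seq_ext_loc (fun _ => 1)); [|apply is_lim_seq_const].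
    exists 1%nat; intros n hn.
    rewrite count_upto_full by exact Hfull.
    field; apply not_0_INR; lia. }
  apply is_lim_seq_unique in HB; apply is_lim_seq_unique in Hone.
  rewrite HB in Hone; injection Hone; lra.
Qed.

Lemma st_LIM_S_le (X : Type) (S : X -> X -> X -> R) (r : R) (x : nat -> X) (y z : X) :
  is_S_metric S -> st_LIM S r x y -> st_LIM S r x z -> S y y z <= 3 * r.
Proof.
  intros HS Hy Hz.
  apply Rle_plus_epsilon; intros eps heps.
  assert (heps3 : 0 < eps / 3) by lra.
  destruct (density_zero_exists_not _ (density_zero_union _ _ (Hy _ heps3) (Hz _ heps3)))
    as [n [hn Hn]].
  assert (Hny : S (x n) (x n) y < r + eps / 3)
    by (apply Rnot_ge_lt; intros H; apply Hn; left; auto).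
  assert (Hnz : S (x n) (x n) z < r + eps / 3)
    by (apply Rnot_ge_lt; intros H; apply Hn; right; auto).
  pose proof (S_metric_le_through X S HS y z (x n)); lra.
Qed.

Theorem theorem4p2 (X : Type) (S : X -> X -> X -> R) (r : R) (x : nat -> X) :
  is_S_metric S -> 0 <= r ->
  (exists l, st_LIM S r x l) ->
  Rbar_le (diam S (st_LIM S r x)) (Finite (3 * r)).
Proof.
  intros HS _ _.
  apply (Lub_Rbar_correct _).
  intros d [y [z [Hy [Hz ->]]]].
  exact (st_LIM_S_le X S r x y z HS Hy Hz).
Qed.
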